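(* Let $(u_n)_{n \geq 1}$ be a sequence of unitary matrices such that $u_n \in V(n)$ for all $n \geq 1$. Then $(u_n)_{n\ge1}$ is a virtual rotation in the sense of Neretin if and only if it is a virtual isometry.
   Context: $V(n)$ denotes the set of $n\times n$ unitary matrices which do not have $1$ as an eigenvalue. For $n\ge m\ge1$ and $u\in V(n)$ written in blocks $u=\begin{pmatrix}A&B\\C&D\end{pmatrix}$ of sizes $m\times m$, $m\times(n-m)$, $(n-m)\times m$, $(n-m)\times(n-m)$, $1-D$ is invertible and one sets $\tilde\pi_{n,m}(u) := A + B(1-D)^{-1}C\in V(m)$. A virtual rotation in the sense of Neretin is a sequence $(u_n)_{n\ge1}$ with $u_n\in V(n)$ and $u_m=\tilde\pi_{n,m}(u_n)$ for all $n\ge m\ge1$. Let $(e_k)$ be the canonical basis of $\ell^2$; identify $\mathbb{C}^n$ with the span of $e_1,\dots,e_n$ and $U(n)$ with the unitary operators fixing every $e_k$, $k>n$. For $n\ge m\ge1$ and $u\in U(n)$, $\pi_{n,m}(u)$ is the unique $v\in U(m)$ such that the range of $u-v$ is contained in $(u-\mathrm{Id})(\mathrm{span}\{e_k:k>m\})$ (existence and uniqueness are known). A virtual isometry is a sequence $(u_n)_{n\ge1}$ with $u_n\in U(n)$ and $\pi_{n+1,n}(u_{n+1})=u_n$ for all $n\ge1$. *)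

From HB Require Import structures.
From mathcomp Require Import all_boot all_order all_algebra.
From mathcomp Require Import complex reals.
Set Implicit Arguments. Unset Strict Implicit. Unset Printing Implicit Defensive.
Import Order.TTheory GRing.Theory Num.Theory.
Local Open Scope ring_scope.
Local Open Scope sesquilinear_scope.

Section Defs.
Variable R : realType.
Local Notation C := R[i].

Definition unitary (n : nat) (u : 'M[C]_n) : Prop := u \is unitarymx.

Definition inV (n : nat) (u : 'M[C]_n) : Prop :=
  unitary u /\ ~~ eigenvalue u 1.

Definition blockify (n m : nat) (H : (m <= n)%N) (u : 'M[C]_n) : 'M[C]_(m + (n - m)) :=
  castmx (esym (subnKC H), esym (subnKC H)) u.

Definition tpi (n m : nat) (H : (m <= n)%N) (u : 'M[C]_n) : 'M[C]_m :=
  let w := blockify H u in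
  ulsubmx w + ursubmx w *m invmx (1%:M - drsubmx w) *m dlsubmx w.

Definition virtual_rotation (u : forall n : nat, 'M[C]_n) : Prop :=
  (forall n, (1 <= n)%N -> inV (u n)) /\
  forall n m (H : (m <= n)%N), (1 <= m)%N -> u m = tpi H (u n).

Definition embed (n m : nat) (H : (m <= n)%N) (v : 'M[C]_m) : 'M[C]_n :=
  castmx (subnKC H, subnKC H) (block_mx v 0 0 1%:M).

(* is_pi H u v  <->  v = pi_{n,m}(u), i.e. v \in U(m) and the range of
   u - v is contained in (u - Id)(span{e_k : k > m}).  Everything lives in
   C^n = span{e_1..e_n} since both u and v fix e_k for k > n; ranges are
   column spaces, expressed as row spaces of transposes. Vectors e_k, k > m,
   (k <= n) are the last n - m columns of the identity. *)
Definition is_pi (n m : nat) (H : (m <= n)%N) (u : 'M[C]_n) (v : 'M[C]_m) : Prop :=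
  unitary v /\
  (((u - embed H v)^T) <=
     (((u - 1%:M) *m castmx (subnKC H, erefl (n - m)%N)
                       (col_mx (0 : 'M[C]_(m, n - m)) 1%:M))^T))%MS.

Definition virtual_isometry (u : forall n : nat, 'M[C]_n) : Prop :=
  (forall n, (1 <= n)%N -> unitary (u n)) /\
  forall n (H : (n <= n.+1)%N), (1 <= n)%N -> is_pi H (u n.+1) (u n).

End Defs.

From HB Require Import structures.
From mathcomp Require Import all_boot all_order all_algebra.
From mathcomp Require Import complex reals.

(* Write u = [A B; C D] and tpi(u) = A + B (1 - D)^-1 C.  For any row vector x,
   the vector [x y] with y = x B (1 - D)^-1 is sent by u to [x tpi(u)  y]; and
   since u preserves norms, any z whose last n - m coordinates are fixed by u
   satisfies (z u)_{<m} = z_{<m} tpi(u).  This characterisation of tpi yields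
   tpi_{n,m} o tpi_{p,n} = tpi_{p,m}.  Solving the range condition of is_pi block
   by block shows that it determines v as tpi(u), so the one-step compatibilities
   of a virtual isometry are those of a virtual rotation, and they propagate to
   all m <= n. *)

Set Implicit Arguments. Unset Strict Implicit. Unset Printing Implicit Defensive.
Import Order.TTheory GRing.Theory Num.Theory.
Local Open Scope ring_scope.
Local Open Scope sesquilinear_scope.

Section Dotmx.
Variable C : numClosedFieldType.

Lemma dotmx_unitary n (z : 'rV[C]_n) (u : 'M[C]_n) :
  u \is unitarymx -> dotmx (z *m u) (z *m u) = dotmx z z.
Proof. by move=> Uu; rewrite !dotmxE trmx_mul map_mxM mulmxA mulmxtVK. Qed.

Lemma dotmx_row_mx m k (a a' : 'rV[C]_m) (b b' : 'rV[C]_k) :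
  dotmx (row_mx a b) (row_mx a' b') = dotmx a a' + dotmx b b'.
Proof. by rewrite !dotmxE tr_row_mx map_col_mx mul_row_col mxE. Qed.

End Dotmx.

Section BlockTransfer.
Variable R : realType.
Local Notation C := R[i].
Variables m k : nat.
Implicit Types (u : 'M[C]_(m + k)) (z : 'rV[C]_(m + k)).

Definition tpi_block u : 'M[C]_m :=
  ulsubmx u + ursubmx u *m invmx (1%:M - drsubmx u) *m dlsubmx u.

(* A vector [0 y] with [y D = y] is moved only in its first block, which must
   then vanish since [u] preserves norms; so [y] would be a fixed vector. *)
Lemma unitmx_1_drsubmx u :
  u \is unitarymx -> ~~ eigenvalue u 1 -> 1%:M - drsubmx u \in unitmx.
Proof.
move=> Uu u_not1; rewrite unitmxE unitfE; apply/negP => /det0P [y y_neq0].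
rewrite mulmxBr mulmx1 => /eqP; rewrite subr_eq0 => /eqP yD.
have u0y : row_mx 0 y *m u = row_mx (y *m dlsubmx u) y.
  by rewrite -{1}(submxK u) mul_row_block !mul0mx !add0r -yD.
have /eqP : dotmx (y *m dlsubmx u) (y *m dlsubmx u) = 0.
  apply/(addIr (dotmx y y)); rewrite add0r -dotmx_row_mx -u0y dotmx_unitary //.
  by rewrite dotmx_row_mx linear0l add0r.
rewrite dnorm_eq0 => /eqP yC0; move/negP: u_not1; apply; apply/eigenvalueP.
exists (row_mx 0 y); first by rewrite u0y yC0 scale1r.
by rewrite -row_mx0; apply: contra y_neq0 => /eqP/eq_row_mx[_ ->].
Qed.

Lemma is_pi_block (A : 'M[C]_m) (B : 'M[C]_(m, k)) (Cl : 'M[C]_(k, m))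
    (D : 'M[C]_k) (v : 'M[C]_m) :
  1%:M - D \in unitmx ->
  (((block_mx A B Cl D - block_mx v 0 0 1%:M)^T) <=
     (((block_mx A B Cl D - 1%:M) *m col_mx (0 : 'M[C]_(m, k)) 1%:M)^T))%MS
  <-> v = A + B *m invmx (1%:M - D) *m Cl.
Proof.
move=> D1_unit.
have -> : block_mx A B Cl D - block_mx v 0 0 1%:M = block_mx (A - v) B Cl (D - 1%:M).
  by rewrite opp_block_mx add_block_mx !oppr0 !addr0.
have -> : (block_mx A B Cl D - 1%:M) *m col_mx (0 : 'M[C]_(m, k)) 1%:M
          = col_mx B (D - 1%:M).
  rewrite [1%:M : 'M_(m + k)]scalar_mx_block opp_block_mx add_block_mx.
  by rewrite mul_block_col !mulmx0 !mulmx1 !oppr0 !addr0 !add0r.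
split.
  case/submxP => M /(congr1 trmx); rewrite trmx_mul !trmxK.
  rewrite -[M^T]hsubmxK mul_mx_row block_mxEh => /eq_row_mx [].
  rewrite mul_col_mx => /eq_col_mx [Av Cl_eq] _.
  have N_eq : lsubmx M^T = - (invmx (1%:M - D) *m Cl).
    by rewrite -(mulKmx D1_unit (lsubmx M^T)) -[1%:M - D]opprB mulNmx -Cl_eq mulmxN.
  have -> : v = A - (A - v) by rewrite opprB addrC subrK.
  by rewrite Av N_eq mulmxN opprK mulmxA.
move=> ->; apply/submxP; exists (row_mx (- (invmx (1%:M - D) *m Cl)) 1%:M)^T.
rewrite -trmx_mul mul_col_row !mulmx1 mulmxN mulmxA opprD addNKr; congr trmx.
by congr block_mx; rewrite mulmxN -mulNmx opprB mulmxA mulmxV // mul1mx.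
Qed.

Section Fixed.
Variable u : 'M[C]_(m + k).
Hypotheses (Uu : u \is unitarymx) (u_not1 : ~~ eigenvalue u 1).

Lemma tpi_block_extension (x : 'rV[C]_m) :
  let y := x *m ursubmx u *m invmx (1%:M - drsubmx u) in
  row_mx x y *m u = row_mx (x *m tpi_block u) y.
Proof.
move=> y; have yD : y *m (1%:M - drsubmx u) = x *m ursubmx u.
  by rewrite mulmxKV // unitmx_1_drsubmx.
rewrite -{1}(submxK u) mul_row_block /tpi_block mulmxDr !mulmxA; congr row_mx.
by move: yD; rewrite mulmxBr mulmx1 => <-; rewrite subrK.
Qed.

(* Subtracting the extension of [lsubmx z] leaves a vector [d = [0 d2]] with
   [rsubmx (d *m u) = d2]; norm preservation kills [lsubmx (d *m u)]. *)
Lemma tpi_block_fixed z :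
  rsubmx (z *m u) = rsubmx z -> lsubmx (z *m u) = lsubmx z *m tpi_block u.
Proof.
move=> z_fix; set x := lsubmx z; move: (tpi_block_extension x).
set y := _ *m invmx _ => ext.
pose d := z - row_mx x y.
have dE : d = row_mx 0 (rsubmx z - y).
  by rewrite /d -{1}(hsubmxK z) opp_row_mx add_row_mx subrr.
have duE : d *m u = row_mx (lsubmx (z *m u) - x *m tpi_block u) (rsubmx z - y).
  by rewrite /d mulmxBl ext -{1}(hsubmxK (z *m u)) z_fix opp_row_mx add_row_mx.
have /eqP : dotmx (lsubmx (z *m u) - x *m tpi_block u)
                  (lsubmx (z *m u) - x *m tpi_block u) = 0.
  apply/(addIr (dotmx (rsubmx z - y) (rsubmx z - y))).
  rewrite add0r -dotmx_row_mx -duE dotmx_unitary // dE dotmx_row_mx.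
  by rewrite linear0l add0r.
by rewrite dnorm_eq0 subr_eq0 => /eqP.
Qed.

End Fixed.

End BlockTransfer.

Section Transfer.
Variable R : realType.
Local Notation C := R[i].

Definition trunc_row n m (H : (m <= n)%N) (z : 'rV[C]_n) : 'rV[C]_m :=
  \row_j z 0 (widen_ord H j).

Definition fixes_tail m n (u : 'M[C]_n) (z : 'rV[C]_n) : Prop :=
  forall i : 'I_n, (m <= i)%N -> (z *m u) 0 i = z 0 i.

Lemma trunc_row_lsubmx m k (H : (m <= m + k)%N) (z : 'rV[C]_(m + k)) :
  trunc_row H z = lsubmx z.
Proof. by apply/rowP => j; rewrite !mxE; congr (z 0 _); apply: val_inj. Qed.

Lemma fixes_tailE m k (u : 'M[C]_(m + k)) (z : 'rV[C]_(m + k)) :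
  fixes_tail m u z <-> rsubmx (z *m u) = rsubmx z.
Proof.
split=> [z_fix | /rowP z_fix i].
  by apply/rowP => j; rewrite [LHS]mxE [RHS]mxE z_fix ?leq_addr.
case: (splitP i) => [j -> | j i_eq _]; first by rewrite leqNgt ltn_ord.
by move: (z_fix j); rewrite [LHS]mxE [RHS]mxE (_ : rshift m j = i) //; apply: val_inj.
Qed.

Lemma tpi_fixed n m (H : (m <= n)%N) (u : 'M[C]_n) (z : 'rV[C]_n) :
  inV u -> fixes_tail m u z -> trunc_row H (z *m u) = trunc_row H z *m tpi H u.
Proof.
rewrite /tpi /blockify; move: (subnKC H) u z; set k := (n - m)%N; clearbody k.
move=> e; case: n / e H => H u z; rewrite castmx_id => -[Uu u_not1].
by rewrite !trunc_row_lsubmx fixes_tailE; apply: tpi_block_fixed.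
Qed.

Lemma tpi_extension n m (H : (m <= n)%N) (u : 'M[C]_n) (x : 'rV[C]_m) :
  inV u -> exists2 z : 'rV[C]_n, trunc_row H z = x & fixes_tail m u z.
Proof.
move: (subnKC H) u; set k := (n - m)%N; clearbody k.
move=> e; case: n / e H => H u [Uu u_not1].
have ext := tpi_block_extension Uu u_not1 x.
exists (row_mx x (x *m ursubmx u *m invmx (1%:M - drsubmx u))).
  by rewrite trunc_row_lsubmx row_mxKl.
by rewrite fixes_tailE ext !row_mxKr.
Qed.

Lemma trunc_row_comp p n m (Hnp : (n <= p)%N) (Hmn : (m <= n)%N)
    (Hmp : (m <= p)%N) (z : 'rV[C]_p) :
  trunc_row Hmn (trunc_row Hnp z) = trunc_row Hmp z.
Proof. by apply/rowP => j; rewrite !mxE; congr (z 0 _); apply: val_inj. Qed.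

Lemma fixes_tail_le m n p (Hmn : (m <= n)%N) (u : 'M[C]_p) (z : 'rV[C]_p) :
  fixes_tail m u z -> fixes_tail n u z.
Proof. by move=> z_fix i Hi; rewrite z_fix // (leq_trans Hmn). Qed.

Lemma tpi_comp p n m (Hnp : (n <= p)%N) (Hmn : (m <= n)%N) (Hmp : (m <= p)%N)
    (u : 'M[C]_p) :
  inV u -> inV (tpi Hnp u) -> tpi Hmn (tpi Hnp u) = tpi Hmp u.
Proof.
move=> Vu Vv; apply/eqP/mulmxP => x.
have [z <- z_fix] := tpi_extension Hmp x Vu.
have z_fixn : fixes_tail n u z := fixes_tail_le Hmn z_fix.
have y_fix : fixes_tail m (tpi Hnp u) (trunc_row Hnp z).
  move=> i Hi; rewrite -(tpi_fixed Hnp Vu z_fixn) [LHS]mxE [RHS]mxE z_fix //.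
rewrite -{1}(trunc_row_comp Hnp Hmn Hmp) -(tpi_fixed Hmn Vv y_fix).
by rewrite -(tpi_fixed Hnp Vu z_fixn) trunc_row_comp (tpi_fixed Hmp Vu z_fix).
Qed.

Lemma tpi_id n (H : (n <= n)%N) (u : 'M[C]_n) : inV u -> tpi H u = u.
Proof.
move=> Vu; apply/eqP/mulmxP => x.
have trunc_id (z : 'rV[C]_n) : trunc_row H z = z.
  by apply/rowP => j; rewrite mxE; congr (z 0 _); apply: val_inj.
have x_fix : fixes_tail n u x by move=> i; rewrite leqNgt ltn_ord.
by rewrite -[in LHS](trunc_id x) -tpi_fixed ?trunc_id.
Qed.

Lemma is_piP n m (H : (m <= n)%N) (u : 'M[C]_n) (v : 'M[C]_m) :
  inV u -> is_pi H u v <-> unitary v /\ v = tpi H u.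
Proof.
rewrite /is_pi /embed /tpi /blockify; move: (subnKC H) u; set k := (n - m)%N.
clearbody k => e; case: n / e H => H u [Uu u_not1]; rewrite !castmx_id.
rewrite -[u in X in (X <= _)%MS]submxK -[u in X in (_ <= X)%MS]submxK.
by rewrite is_pi_block ?unitmx_1_drsubmx.
Qed.

Lemma tpi_chain (u : forall n, 'M[C]_n) :
  (forall n, (1 <= n)%N -> inV (u n)) ->
  (forall n (H : (n <= n.+1)%N), (1 <= n)%N -> u n = tpi H (u n.+1)) ->
  forall n m (H : (m <= n)%N), (1 <= m)%N -> u m = tpi H (u n).
Proof.
move=> V step; elim=> [|n IH] m H m_gt0; first by case: m H m_gt0.
have [m_eq | m_ne] := eqVneq m n.+1; first by subst m; rewrite tpi_id //; apply: V.
have Hmn : (m <= n)%N by rewrite -ltnS ltn_neqAle m_ne H.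
have n_gt0 : (0 < n)%N := leq_trans m_gt0 Hmn.
have Vn := V n n_gt0; rewrite (step n (leqnSn n) n_gt0) in Vn.
by rewrite (IH m Hmn m_gt0) (step n (leqnSn n) n_gt0) tpi_comp //; apply: V.
Qed.

End Transfer.

Theorem proposition2p4 (R : realType) (u : forall n : nat, 'M[R[i]]_n) :
  (forall n : nat, (1 <= n)%N -> inV (u n)) ->
  (virtual_rotation u <-> virtual_isometry u).
Proof.
move=> V; split=> [[_ rot] | [_ iso]].
  split=> [n /V [] // | n H n_gt0].
  by apply/is_piP; [exact: V | split; [case: (V n n_gt0) | exact: rot]].
split=> //; apply: tpi_chain => // n H n_gt0.
by have /is_piP [|_ ->] := iso n H n_gt0; first exact: V.
Qed.
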